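(* Let $n\ge 3$ and let $M_t$, $t\in(-\infty,0]$, be a noncompact ancient solution of mean curvature flow in $\mathbb{R}^{n+1}$ which is strictly convex, uniformly two-convex, noncollapsed, and rotationally symmetric about the $x_{n+1}$-axis, with cross-sectional radius $r(z,t)$, extinction times $\mathcal{T}(z)$ and constants $C_1,C_2$ as in the context. Then there is $R_0$ such that whenever $z<0$, $t<\mathcal{T}(z)$ and $r(z,t)\ge R_0$, \[2(n-1)\,[\mathcal{T}(z)-t] \leq r(z,t)^2 \leq 2(n-1)\,[\mathcal{T}(z)-t] + 8C_2[\mathcal{T}(z)-t]^{\frac{1}{4}}+C_1^2.\]
   Context: Strictly convex: positive definite second fundamental form; uniformly two-convex: $\lambda_1+\lambda_2\ge\beta H$ for some $\beta>0$; noncollapsed: each $M_t$ bounds a domain and each $x\in M_t$ is touched from inside by a ball of radius $\alpha/H(x,t)$ in that domain. $M_t$ is oriented so that its noncompact end points in the positive $x_{n+1}$-direction and normalized so that the tip of $M_0$ is the origin. $r(z,t)$ is the radius of the round sphere $M_t\cap\{x_{n+1}=z\}$ (where nonempty); it satisfies $r_t=\frac{r_{zz}}{1+r_z^2}-\frac{n-1}{r}$, and $r>0$, $r_z>0$, $r_t<0$, $r_{zz}<0$. For $z<0$, $\mathcal{T}(z)$ is defined by $r(z,t)>0$ for $t<\mathcal{T}(z)$ and $\lim_{t\to\mathcal{T}(z)}r(z,t)=0$. $C_1,C_2$ are constants such that $0\le -r_{zz}(z,t)\le C_2\, r(z,t)^{-5/2}$ whenever $r(z,t)\ge C_1$ (such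 constants exist for this class of solutions). *)

From Stdlib Require Import Reals.
From Coquelicot Require Import Coquelicot.
Open Scope R_scope.

Definition d_z (r : R -> R -> R) (z t : R) : R := Derive (fun w => r w t) z.
Definition d_zz (r : R -> R -> R) (z t : R) : R := Derive (fun w => d_z r w t) z.
Definition d_t (r : R -> R -> R) (z t : R) : R := Derive (fun s => r z s) t.

(* r is the radius profile of a rotationally symmetric mean curvature flow in
   R^{n+1}, defined for times t in (-oo,0]; the cross-section at height z is
   nonempty (a round sphere of positive radius) exactly where r z t > 0.
   On the (interior of the) region where it is defined, r is differentiable
   (twice in z), solves the radius equation of MCF, and satisfies
   r_z > 0, r_t < 0, r_zz < 0. *)
Definition mcf_radius_profile (n : nat) (r : R -> R -> R) : Prop :=
  forall z t, t < 0 -> 0 < r z t ->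
    ex_derive (fun w => r w t) z /\
    ex_derive (fun w => d_z r w t) z /\
    ex_derive (fun s => r z s) t /\
    d_t r z t = d_zz r z t / (1 + (d_z r z t) ^ 2) - (INR n - 1) / r z t /\
    0 < d_z r z t /\ d_t r z t < 0 /\ d_zz r z t < 0.

Definition extinction_time (r : R -> R -> R) (T : R -> R) : Prop :=
  forall z, z < 0 ->
    T z <= 0 /\
    (forall t, t < T z -> 0 < r z t) /\
    filterlim (fun t => r z t) (at_left (T z)) (locally 0).

Definition curvature_decay (r : R -> R -> R) (C1 C2 : R) : Prop :=
  forall z t, t < 0 -> 0 < r z t -> C1 <= r z t ->
    0 <= - d_zz r z t <= C2 * Rpower (r z t) (- (5 / 2)).

From Stdlib Require Import Reals Lra.
From Coquelicot Require Import Coquelicot.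
Open Scope R_scope.

(* Write k = n - 1.  The radius equation gives r r_t + k = r r_zz / (1 + r_z^2),
   which lies between r r_zz and 0.  Fix the level z and follow r in time.
   Since r r_t + k <= 0, the quantity r^2 + 2 k t is nonincreasing, and as r stays
   positive up to T(z) this gives r^2 >= 2 k (T(z) - t).  Where r >= C1 the decay of
   r_zz gives r r_t + k >= - C2 r^(-3/2) >= - C2 (T(z) - t)^(-3/4), by the lower bound,
   so r^2 + 2 k t - 8 C2 (T(z) - t)^(1/4) is nondecreasing while r >= C1.  Since
   r -> 0 at T(z), r reaches any level c = max(C1, delta) before T(z); comparing t
   with that time and letting delta -> 0 gives the upper bound. *)

Lemma nondecreasing_of_derive_nonneg (f df : R -> R) (a b : R) : a <= b ->
  (forall x, a <= x <= b -> is_derive f x (df x)) ->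
  (forall x, a <= x <= b -> 0 <= df x) -> f a <= f b.
Proof.
  intros Hab Hd Hpos.
  assert (Hint : forall x, Rmin a b <= x <= Rmax a b -> a <= x <= b).
  { rewrite Rmin_left, Rmax_right by lra. easy. }
  destruct (MVT_gen f a b df) as [c [Hc Hmvt]].
  - intros x Hx. apply Hd, Hint. lra.
  - intros x Hx. apply continuity_pt_filterlim, (ex_derive_continuous f x).
    exists (df x). apply Hd, Hint, Hx.
  - assert (0 <= df c) by (apply Hpos, Hint, Hc). nra.
Qed.

Lemma nonincreasing_of_derive_nonpos (f df : R -> R) (a b : R) : a <= b ->
  (forall x, a <= x <= b -> is_derive f x (df x)) ->
  (forall x, a <= x <= b -> df x <= 0) -> f b <= f a.
Proof.
  intros Hab Hd Hneg.
  enough (- f a <= - f b) by lra.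
  apply (nondecreasing_of_derive_nonneg (fun x => - f x) (fun x => - df x)); [easy | |].
  - intros x Hx. exact (is_derive_opp f x (df x) (Hd x Hx)).
  - intros x Hx. specialize (Hneg x Hx). lra.
Qed.

Lemma Rpower_opp_le_compat (a b e : R) : 0 <= e -> 0 < a <= b ->
  Rpower b (- e) <= Rpower a (- e).
Proof.
  intros He Hab. rewrite !Rpower_Ropp.
  apply Rinv_le_contravar; [apply exp_pos | apply Rle_Rpower_l; lra].
Qed.

Lemma Rpower_sqr (x e : R) : 0 < x -> Rpower (x ^ 2) e = Rpower x (2 * e).
Proof.
  intros Hx. replace (x ^ 2) with (Rpower x (INR 2)) by (apply Rpower_pow, Hx).
  rewrite Rpower_mult. simpl INR. f_equal.
Qed.

Lemma Rmult_Rpower (x e : R) : 0 < x -> x * Rpower x e = Rpower x (e + 1).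
Proof. intros Hx. rewrite Rpower_plus, Rpower_1 by exact Hx. ring. Qed.

Lemma is_derive_Rpower (e x : R) : 0 < x ->
  is_derive (fun y => Rpower y e) x (e * Rpower x (e - 1)).
Proof. intros Hx. apply is_derive_Reals, derivable_pt_lim_power, Hx. Qed.

Lemma at_left_ex_small (f : R -> R) (a b eps : R) :
  filterlim f (at_left a) (locally 0) -> 0 < eps -> b < a ->
  exists y, b < y < a /\ Rabs (f y) < eps.
Proof.
  intros Hf Heps Hba.
  assert (Hsmall : at_left a (fun y => Rabs (f y) < eps)).
  { apply (Hf (fun y => Rabs y < eps)). exists (mkposreal eps Heps). intros y Hy.
    change (Rabs (y - 0) < eps) in Hy. rewrite Rminus_0_r in Hy. exact Hy. }
  assert (Hright : at_left a (fun y => b < y < a)).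
  { exists (mkposreal (a - b) ltac:(lra)). intros y Hy Hya.
    change (Rabs (y - a) < a - b) in Hy. apply Rabs_lt_between' in Hy. lra. }
  destruct (Hierarchy.filter_ex _ (filter_and _ _ Hright Hsmall)) as [y Hy].
  exists y. exact Hy.
Qed.

Lemma Rle_of_forall_left (a b x : R) : x < a ->
  (forall y, x <= y < a -> y <= b) -> a <= b.
Proof.
  intros Hxa Hle. destruct (Rle_or_lt a b) as [Hab | Hba]; [exact Hab |].
  set (y := Rmax x ((a + b) / 2)).
  assert (x <= y) by apply Rmax_l.
  assert ((a + b) / 2 <= y) by apply Rmax_r.
  assert (y < a) by (apply Rmax_lub_lt; lra).
  specialize (Hle y ltac:(lra)). lra.
Qed.

Section Shrinking_radius.

Variables (k C1 C2 T : R) (rho drho : R -> R).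

Hypothesis k_large : 1 <= 2 * k.
Hypothesis rho_pos : forall s, s < T -> 0 < rho s.
Hypothesis rho_derive : forall s, s < T -> is_derive rho s (drho s).
Hypothesis speed_upper : forall s, s < T -> rho s * drho s + k <= 0.
Hypothesis speed_lower : forall s, s < T -> C1 <= rho s ->
  - C2 * Rpower (rho s) (- (3 / 2)) <= rho s * drho s + k.
Hypothesis rho_vanishes : filterlim rho (at_left T) (locally 0).

Lemma rho_nonincreasing (a b : R) : a <= b -> b < T -> rho b <= rho a.
Proof.
  intros Hab HbT. apply (nonincreasing_of_derive_nonpos rho drho); [easy | |].
  - intros x Hx. apply rho_derive. lra.
  - intros x Hx. assert (Hx' : x < T) by lra.
    specialize (rho_pos x Hx'). specialize (speed_upper x Hx'). nra.
Qed.

Lemma rho_sqr_plus_linear_nonincreasing (a b : R) : a <= b -> b < T ->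
  rho b ^ 2 + 2 * k * b <= rho a ^ 2 + 2 * k * a.
Proof.
  intros Hab HbT.
  apply (nonincreasing_of_derive_nonpos (fun s => rho s ^ 2 + 2 * k * s)
           (fun s => 2 * (rho s * drho s + k))); [easy | |].
  - intros x Hx. assert (Hd := rho_derive x ltac:(lra)).
    auto_derive; [exists (drho x); exact Hd |].
    erewrite is_derive_unique by exact Hd. ring.
  - intros x Hx. specialize (speed_upper x ltac:(lra)). lra.
Qed.

Lemma rho_sqr_lower_bound (s : R) : s < T -> 2 * k * (T - s) <= rho s ^ 2.
Proof.
  intros HsT.
  assert (Hscale : 2 * k * (s + rho s ^ 2 / (2 * k)) = 2 * k * s + rho s ^ 2)
    by (field; lra).
  assert (HT : T <= s + rho s ^ 2 / (2 * k)).
  { apply (Rle_of_forall_left _ _ s HsT). intros y Hy.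
    assert (Hmono := rho_sqr_plus_linear_nonincreasing s y ltac:(lra) ltac:(lra)).
    assert (0 <= rho y ^ 2) by nra.
    apply (Rmult_le_reg_l (2 * k)); [lra |]. rewrite Hscale. lra. }
  apply (Rmult_le_compat_l (2 * k)) in HT; [| lra].
  rewrite Hscale in HT. lra.
Qed.

Lemma C2_nonneg (t : R) : t < T -> C1 <= rho t -> 0 <= C2.
Proof.
  intros HtT HC1.
  assert (Hlow := speed_lower t HtT HC1).
  assert (Hup := speed_upper t HtT).
  assert (Hp : 0 < Rpower (rho t) (- (3 / 2))) by apply exp_pos.
  nra.
Qed.

Lemma rho_Rpower_le (x : R) : x < T ->
  Rpower (rho x) (- (3 / 2)) <= Rpower (T - x) (- (3 / 4)).
Proof.
  intros HxT.
  replace (- (3 / 2)) with (2 * - (3 / 4)) by field.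
  rewrite <- Rpower_sqr by (apply rho_pos, HxT).
  apply Rpower_opp_le_compat; [lra |].
  assert (Hlow := rho_sqr_lower_bound x HxT). nra.
Qed.

Lemma lyapunov_nondecreasing (t s : R) : t <= s -> s < T -> C1 <= rho s ->
  rho t ^ 2 + 2 * k * t - 8 * C2 * Rpower (T - t) (1 / 4)
  <= rho s ^ 2 + 2 * k * s - 8 * C2 * Rpower (T - s) (1 / 4).
Proof.
  intros Hts HsT HC1.
  apply (nondecreasing_of_derive_nonneg
           (fun x => rho x ^ 2 + 2 * k * x - 8 * C2 * Rpower (T - x) (1 / 4))
           (fun x => 2 * (rho x * drho x + k) + 2 * C2 * Rpower (T - x) (- (3 / 4))));
    [easy | |].
  - intros x Hx. assert (Hd := rho_derive x ltac:(lra)).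
    assert (Hp := is_derive_Rpower (1 / 4) (T - x) ltac:(lra)).
    auto_derive.
    { split; [exists (drho x); exact Hd |].
      split; [exists (1 / 4 * Rpower (T - x) (1 / 4 - 1)); exact Hp | easy]. }
    erewrite is_derive_unique by exact Hd.
    erewrite is_derive_unique by exact Hp.
    replace (1 / 4 - 1) with (- (3 / 4)) by field. field.
  - intros x Hx. assert (HxT : x < T) by lra.
    assert (rho s <= rho x) by (apply rho_nonincreasing; lra).
    assert (HC1x : C1 <= rho x) by lra.
    assert (Hlow := speed_lower x HxT HC1x).
    assert (Hpow := rho_Rpower_le x HxT).
    assert (HC2 := C2_nonneg x HxT HC1x).
    assert (0 <= C2 * (Rpower (T - x) (- (3 / 4)) - Rpower (rho x) (- (3 / 2))))
      by (apply Rmult_le_pos; lra).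
    lra.
Qed.

Lemma rho_sqr_upper_bound_at (t s : R) : t <= s -> s < T -> C1 <= rho s ->
  rho t ^ 2 <= rho s ^ 2 + 2 * k * (T - t) + 8 * C2 * Rpower (T - t) (1 / 4).
Proof.
  intros Hts HsT HC1.
  assert (Hly := lyapunov_nondecreasing t s Hts HsT HC1).
  assert (HC2 := C2_nonneg s HsT HC1).
  assert (0 <= C2 * Rpower (T - s) (1 / 4)) by (apply Rmult_le_pos; [lra | left; apply exp_pos]).
  assert (k * s <= k * T) by (apply Rmult_le_compat_l; lra).
  lra.
Qed.

Lemma rho_attains (t c : R) : t < T -> 0 < c < rho t -> exists s, t <= s < T /\ rho s = c.
Proof.
  intros HtT Hc.
  destruct (at_left_ex_small rho T t c rho_vanishes ltac:(lra) HtT) as [s' [Hs' Hsmall]].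
  rewrite Rabs_pos_eq in Hsmall by (left; apply rho_pos; lra).
  assert (Hcont : forall x, t <= x <= s' -> continuity_pt (fun y => c - rho y) x).
  { intros x Hx. apply continuity_pt_filterlim, (ex_derive_continuous (fun y => c - rho y) x).
    auto_derive. exists (drho x). apply rho_derive. lra. }
  destruct (Ranalysis5.IVT_interv _ t s' Hcont ltac:(lra) ltac:(lra) ltac:(lra)) as [s [Hs Hzero]].
  exists s. split; lra.
Qed.

Lemma rho_sqr_upper_bound (t : R) : t < T -> C1 < rho t ->
  rho t ^ 2 <= 2 * k * (T - t) + 8 * C2 * Rpower (T - t) (1 / 4) + C1 ^ 2.
Proof.
  intros HtT HC1.
  assert (Hrt := rho_pos t HtT).
  apply Rle_plus_epsilon. intros eps Heps.
  set (delta := Rmin (Rmin 1 eps) (rho t / 2)).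
  assert (Hdelta : 0 < delta /\ delta <= 1 /\ delta <= eps /\ delta < rho t).
  { unfold delta. repeat split.
    - repeat apply Rmin_glb_lt; lra.
    - eapply Rle_trans; [apply Rmin_l | apply Rmin_l].
    - eapply Rle_trans; [apply Rmin_l | apply Rmin_r].
    - eapply Rle_lt_trans; [apply Rmin_r | lra]. }
  destruct Hdelta as [Hdelta_pos [Hdelta_1 [Hdelta_eps Hdelta_rho]]].
  set (c := Rmax C1 delta).
  assert (HcC1 : C1 <= c) by apply Rmax_l.
  assert (Hcdelta : delta <= c) by apply Rmax_r.
  assert (Hc_sqr : c ^ 2 <= C1 ^ 2 + eps).
  { unfold c. apply Rmax_case_strong; intros; nra. }
  destruct (rho_attains t c HtT ltac:(split; [lra | apply Rmax_lub_lt; lra])) as [s [Hs Hrs]].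
  assert (Hup := rho_sqr_upper_bound_at t s (proj1 Hs) (proj2 Hs) ltac:(lra)).
  rewrite Hrs in Hup. lra.
Qed.

End Shrinking_radius.

Lemma Rdiv_one_plus_sqr_bounds (a b : R) : a <= 0 -> a <= a / (1 + b ^ 2) <= 0.
Proof.
  intros Ha. assert (Hb : 1 <= 1 + b ^ 2) by nra.
  split.
  - apply (Rmult_le_reg_r (1 + b ^ 2)); [lra |]. field_simplify; nra.
  - apply Rmult_le_0_r; [exact Ha | left; apply Rinv_0_lt_compat; lra].
Qed.

Section Mcf_speed.

Variables (n : nat) (r : R -> R -> R) (z t : R).
Hypothesis profile : mcf_radius_profile n r.
Hypothesis t_neg : t < 0.
Hypothesis r_pos : 0 < r z t.

Lemma mcf_speed_eq :
  r z t * d_t r z t + (INR n - 1) = r z t * (d_zz r z t / (1 + d_z r z t ^ 2)).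
Proof.
  destruct (profile z t t_neg r_pos) as [_ [_ [_ [Heq _]]]].
  assert (0 < 1 + d_z r z t ^ 2) by nra.
  rewrite Heq. field. split; apply Rgt_not_eq; lra.
Qed.

Lemma mcf_speed_upper : r z t * d_t r z t + (INR n - 1) <= 0.
Proof.
  destruct (profile z t t_neg r_pos) as [_ [_ [_ [_ [_ [_ Hzz]]]]]].
  rewrite mcf_speed_eq.
  destruct (Rdiv_one_plus_sqr_bounds (d_zz r z t) (d_z r z t)) as [_ Hq]; [lra |].
  nra.
Qed.

Lemma mcf_speed_lower (C1 C2 : R) : curvature_decay r C1 C2 -> C1 <= r z t ->
  - C2 * Rpower (r z t) (- (3 / 2)) <= r z t * d_t r z t + (INR n - 1).
Proof.
  intros Hdecay HC1.
  destruct (profile z t t_neg r_pos) as [_ [_ [_ [_ [_ [_ Hzz]]]]]].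
  destruct (Hdecay z t t_neg r_pos HC1) as [_ Hbound].
  rewrite mcf_speed_eq.
  destruct (Rdiv_one_plus_sqr_bounds (d_zz r z t) (d_z r z t)) as [Hq _]; [lra |].
  replace (- (3 / 2)) with (- (5 / 2) + 1) by field.
  rewrite <- Rmult_Rpower by exact r_pos.
  assert (0 <= r z t * (d_zz r z t / (1 + d_z r z t ^ 2) - d_zz r z t))
    by (apply Rmult_le_pos; lra).
  assert (0 <= r z t * (C2 * Rpower (r z t) (- (5 / 2)) + d_zz r z t))
    by (apply Rmult_le_pos; lra).
  lra.
Qed.

End Mcf_speed.

Theorem corollary6p7 (n : nat) (r : R -> R -> R) (T : R -> R) (C1 C2 : R) :
  (3 <= n)%nat ->
  mcf_radius_profile n r ->
  extinction_time r T ->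
  curvature_decay r C1 C2 ->
  exists R0 : R, forall z t : R,
    z < 0 -> t < T z -> R0 <= r z t ->
    2 * (INR n - 1) * (T z - t) <= (r z t) ^ 2 /\
    (r z t) ^ 2 <= 2 * (INR n - 1) * (T z - t)
                   + 8 * C2 * Rpower (T z - t) (1 / 4) + C1 ^ 2.
Proof.
  intros Hn Hprofile Hextinct Hdecay.
  assert (Hk : 1 <= 2 * (INR n - 1)) by (apply le_INR in Hn; simpl in Hn; lra).
  exists (C1 + 1). intros z t Hz Ht HR.
  destruct (Hextinct z Hz) as [HT0 [Hpos Hvanish]].
  assert (Hneg : forall s, s < T z -> s < 0) by (intros; lra).
  assert (Hderive : forall s, s < T z -> is_derive (r z) s (d_t r z s)).
  { intros s Hs. apply Derive_correct, (Hprofile z s (Hneg s Hs) (Hpos s Hs)). }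
  assert (Hupper : forall s, s < T z -> r z s * d_t r z s + (INR n - 1) <= 0)
    by (intros s Hs; apply mcf_speed_upper; auto).
  assert (Hlower : forall s, s < T z -> C1 <= r z s ->
            - C2 * Rpower (r z s) (- (3 / 2)) <= r z s * d_t r z s + (INR n - 1))
    by (intros s Hs; apply mcf_speed_lower; auto).
  split.
  - eapply rho_sqr_lower_bound; eauto.
  - eapply rho_sqr_upper_bound; eauto. lra.
Qed.
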